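(* Let $B_n(y)=\sum_{k=0}^n\frac{1}{n+1}\binom{2n+2}{n-k}\binom{n+k}{k}y^k$ be the Borel polynomials. Consider the Riordan array $$L=\left(\frac{1+xy}{(1+(y+1)x)^2},\ \frac{x}{(1+(y+1)x)^2}\right).$$ Then the first column of $L^{-1}$ is $(B_0(y),B_1(y),B_2(y),\dots)^T$, i.e. its generating function is $\sum_n B_n(y)x^n$. Equivalently, $B_n(y)$ is the $n$-th moment of the family of orthogonal polynomials $P_n(x)$ defined by $P_0(x)=1$, $P_1(x)=x-y-2$ and $$P_n(x)=(x-2(y+1))P_{n-1}(x)-(y+1)^2P_{n-2}(x)\quad(n\ge2),$$ i.e. $B_n(y)=\mathcal L(x^n)$ for the linear functional $\mathcal L$ with $\mathcal L(1)=1$ and $\mathcal L(P_n)=0$ for $n\ge1$.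
   Context: A Riordan array $(g(x),f(x))$ (with $g(0)\ne0$, $f(0)=0$, $f'(0)\ne0$) is the lower-triangular matrix with $(n,k)$ entry $[x^n]g(x)f(x)^k$. Riordan arrays form a group under matrix multiplication with $(g,f)\cdot(u,v)=(g\,u(f),v(f))$ and $(g,f)^{-1}=(1/g(\bar f),\bar f)$ where $\bar f$ is the compositional inverse of $f$. Here coefficients are polynomials in $y$. *)

From HB Require Import structures.
From mathcomp Require Import all_boot all_order all_algebra.
Set Implicit Arguments. Unset Strict Implicit. Unset Printing Implicit Defensive.
Import Order.TTheory GRing.Theory Num.Theory.
Local Open Scope ring_scope.

Definition pser (R : Type) := nat -> R.

Section PS.
Variable R : unitRingType.

Definition ps_of_poly (p : {poly R}) : pser R := fun n => p`_n.

Definition ps_mul (a b : pser R) : pser R :=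
  fun n => \sum_(i < n.+1) a i * b (n - i)%N.

Definition ps_one : pser R := fun n => if n == 0%N then 1 else 0.

Definition ps_exp (a : pser R) (k : nat) : pser R := iter k (ps_mul a) ps_one.

(* list of the first n+1 coefficients of the multiplicative inverse of a
   (meaningful when a 0 is a unit) *)
Fixpoint ps_inv_list (a : pser R) (n : nat) : seq R :=
  match n with
  | 0 => [:: (a 0%N)^-1]
  | m.+1 => let l := ps_inv_list a m in
      rcons l (- (a 0%N)^-1 * \sum_(i < m.+1) a (m.+1 - i)%N * nth 0 l i)
  end.

Definition ps_inv (a : pser R) : pser R := fun n => nth 0 (ps_inv_list a n) n.

Definition riordan (g f : pser R) (n k : nat) : R := ps_mul g (ps_exp f k) n.

Definition riordan_trunc (g f : pser R) (N : nat) : 'M[R]_N :=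
  \matrix_(i < N, j < N) riordan g f i j.
End PS.

(* Coefficients are polynomials in y, y := 'X : {poly rat};
   the series variable x is 'X : {poly {poly rat}}. *)
Definition y : {poly rat} := 'X.

Definition Borel (n : nat) : {poly rat} :=
  \sum_(k < n.+1) ((n.+1)%:R^-1 * ('C(2 * n + 2, n - k) * 'C(n + k, k))%:R) *: y ^+ k.

Definition denL : {poly {poly rat}} := (1 + (y + 1) *: 'X) ^+ 2.

Definition gL : pser {poly rat} :=
  ps_mul (ps_of_poly (1 + y *: 'X)) (ps_inv (ps_of_poly denL)).

Definition fL : pser {poly rat} :=
  ps_mul (ps_of_poly 'X) (ps_inv (ps_of_poly denL)).

Fixpoint Ppair (n : nat) : {poly {poly rat}} * {poly {poly rat}} :=
  match n with
  | 0 => (1, 'X - (y + 2)%:P)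
  | m.+1 => let (p, q) := Ppair m in
      (q, ('X - (2%:R * (y + 1))%:P) * q - ((y + 1) ^+ 2)%:P * p)
  end.

Definition P (n : nat) : {poly {poly rat}} := (Ppair n).1.

Definition borel_functional (p : {poly {poly rat}}) : {poly rat} :=
  \sum_(i < size p) p`_i * Borel i.

From HB Require Import structures.
From mathcomp Require Import all_boot all_order all_algebra.
From mathcomp Require Import zify ring.
Import GRing.Theory Num.Theory.
Set Implicit Arguments. Unset Strict Implicit. Unset Printing Implicit Defensive.
Local Open Scope ring_scope.

(* Write c = y + 1, so that f = x / (1 + c x)^2 and g = (1 + y x) / (1 + c x)^2,
   and B(t) = sum_k B_k t^k.  The first column of L^-1 is (B_k)_k iff
   L (B_k)_k = e_0, i.e. iff g B(f) = 1.  The Borel polynomials satisfy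
   y B_k + B_(k-1) = c^(k+1) Cat_(k+1) - [k = 0]; since the Catalan series
   evaluated at c f is 1 + c x (more generally sum_k a_m(k) c^k f^k = (1 + c x)^m
   for the ballot numbers a_m(k)), this gives (y + f) B(f) = c (1 + c x) - 1.
   A direct computation shows g (c (1 + c x) - 1) = y + f, so
   (y + f) (g B(f) - 1) = 0, and y + f can be cancelled because f(0) = 0 and
   y is a nonzerodivisor.  Everything is carried out modulo x^N.
   Finally the rows of L are the coefficient vectors of the P_n: both satisfy
   the three-term recurrence read off the denominator (1 + c x)^2.  Hence
   L(P_n) = sum_k [x^n] g f^k B_k = [n = 0]. *)

Section PowerSeriesInverse.
Variable R : unitRingType.
Implicit Types a : pser R.

Lemma size_ps_inv_list a n : size (ps_inv_list a n) = n.+1.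
Proof. by elim: n => //= n IHn; rewrite size_rcons IHn. Qed.

Lemma nth_ps_inv_list a n i : (i <= n)%N -> nth 0 (ps_inv_list a n) i = ps_inv a i.
Proof.
elim: n => [|n IHn]; first by rewrite leqn0 => /eqP ->.
rewrite leq_eqVlt => /predU1P[-> //|lt_in].
by rewrite /= nth_rcons size_ps_inv_list lt_in IHn.
Qed.

Lemma ps_invS a n :
  ps_inv a n.+1 = - (a 0%N)^-1 * \sum_(i < n.+1) a (n.+1 - i)%N * ps_inv a i.
Proof.
rewrite /ps_inv /= nth_rcons size_ps_inv_list ltnn eqxx; congr (_ * _).
by apply: eq_bigr => i _; rewrite nth_ps_inv_list // -ltnS.
Qed.

Lemma ps_mulV a : a 0%N \is a GRing.unit -> ps_mul a (ps_inv a) =1 ps_one R.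
Proof.
move=> a0_unit [|n]; first by rewrite /ps_mul big_ord1 /ps_inv /= mulrV.
rewrite /ps_mul /ps_one big_ord_recl /= ps_invS mulrA mulrN mulrV // mulN1r.
rewrite (reindex_inj rev_ord_inj) /=; apply/eqP; rewrite addrC subr_eq0; apply/eqP.
apply: eq_bigr => i _; rewrite /bump /=.
have lt_in := ltn_ord i; congr (a _ * ps_inv a _); lia.
Qed.

End PowerSeriesInverse.

Definition eqmodX (R : nzRingType) (N : nat) (p q : {poly R}) :=
  forall i, (i < N)%N -> p`_i = q`_i.

Notation "p = q %[modX N ]" := (eqmodX N p q)
  (at level 70, q at next level, format "p  =  q  %[modX  N ]") : ring_scope.

Section CongruenceModXn.
Variables (R : nzRingType) (N : nat).
Implicit Types p q r a F Q : {poly R}.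

Lemma eqmodX_refl p : p = p %[modX N]. Proof. by []. Qed.

Lemma eqmodX_sym p q : p = q %[modX N] -> q = p %[modX N].
Proof. by move=> epq i lt_iN; rewrite epq. Qed.

Lemma eqmodX_trans q p r : p = q %[modX N] -> q = r %[modX N] -> p = r %[modX N].
Proof. by move=> epq eqr i lt_iN; rewrite epq ?eqr. Qed.

Lemma eqmodXD p q p' q' :
  p = p' %[modX N] -> q = q' %[modX N] -> p + q = p' + q' %[modX N].
Proof. by move=> ep eq i lt_iN; rewrite !coefD ep ?eq. Qed.

Lemma eqmodXB p q p' q' :
  p = p' %[modX N] -> q = q' %[modX N] -> p - q = p' - q' %[modX N].
Proof. by move=> ep eq i lt_iN; rewrite !coefB ep ?eq. Qed.

Lemma eqmodXM p q p' q' :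
  p = p' %[modX N] -> q = q' %[modX N] -> p * q = p' * q' %[modX N].
Proof.
move=> ep eq i lt_iN; rewrite !coefM; apply: eq_bigr => j _.
by rewrite ep ?eq //; apply: leq_ltn_trans lt_iN; rewrite ?leq_subr // -ltnS.
Qed.

Lemma eqmodXX p p' k : p = p' %[modX N] -> p ^+ k = p' ^+ k %[modX N].
Proof. by move=> ep; elim: k => // k IHk; rewrite !exprS; apply: eqmodXM. Qed.

Lemma eqmodX_subr0_eq p q : p - q = 0 %[modX N] -> p = q %[modX N].
Proof. by move=> e i /e /eqP; rewrite coefB coef0 subr_eq0 => /eqP. Qed.

Lemma coef_mul_shift_eq0 a F Q n : F`_0 = 0 ->
  (forall j, (j < n)%N -> Q`_j = 0) -> (a * (F * Q))`_n = 0.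
Proof.
move=> F0 Qlt; rewrite coefM big1 // => i _; rewrite coefM big1 ?mulr0 // => j _.
case: j => [[|j] lt_j] /=; first by rewrite F0 mul0r.
by rewrite Qlt ?mulr0 //; move: (ltn_ord i) lt_j; lia.
Qed.

Lemma eqmodX0_rec (D : nat -> {poly R}) a F : F`_0 = 0 -> D 0%N = 0 %[modX N] ->
  (forall m, D m.+1 = D m + a * (F * D m.+2) %[modX N]) ->
  forall m, D m = 0 %[modX N].
Proof.
move=> F0 D0 Drec m n; elim/ltn_ind: n m => n IHn m lt_nN; rewrite coef0.
elim: m => [|m IHm]; first by rewrite D0 ?coef0.
rewrite Drec // coefD IHm add0r coef_mul_shift_eq0 // => j lt_jn.
by rewrite IHn ?coef0 //; apply: ltn_trans lt_nN.
Qed.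

End CongruenceModXn.

Lemma eqmodX0_cancel_mulCD (R : idomainType) N a (F E : {poly R}) :
  a != 0 -> F`_0 = 0 -> (a%:P + F) * E = 0 %[modX N] -> E = 0 %[modX N].
Proof.
move=> a_neq0 F0 eE n; elim/ltn_ind: n => n IHn lt_nN; rewrite coef0.
have := eE n lt_nN; rewrite mulrDl coefD coefCM coef0 -[F * E]mul1r.
rewrite coef_mul_shift_eq0 // => [|j lt_jn]; last by rewrite IHn ?coef0 // (ltn_trans lt_jn).
by rewrite addr0 => /eqP; rewrite mulf_eq0 (negPf a_neq0) => /eqP.
Qed.

Section TruncatedSeries.
Variables (R : unitRingType) (N : nat).
Implicit Types s t : pser R.

Definition trunc s : {poly R} := \poly_(i < N) s i.

Lemma coef_trunc s i : (i < N)%N -> (trunc s)`_i = s i.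
Proof. by move=> lt_iN; rewrite coef_poly lt_iN. Qed.

Lemma trunc_mul s t : trunc (ps_mul s t) = trunc s * trunc t %[modX N].
Proof.
move=> i lt_iN; rewrite coef_trunc // coefM; apply: eq_bigr => j _.
have le_ji : (j <= i)%N by rewrite -ltnS.
by rewrite !coef_trunc // (leq_ltn_trans _ lt_iN) ?leq_subr.
Qed.

Lemma trunc_of_poly p : trunc (ps_of_poly p) = p %[modX N].
Proof. by move=> i lt_iN; rewrite coef_trunc. Qed.

Lemma trunc_one : trunc (ps_one R) = 1 %[modX N].
Proof. by move=> i lt_iN; rewrite coef_trunc // coef1 /ps_one; case: eqP. Qed.

Lemma trunc_exp s k : trunc (ps_exp s k) = trunc s ^+ k %[modX N].
Proof.
elim: k => [|k IHk]; first exact: trunc_one.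
rewrite exprS /ps_exp iterS -/(ps_exp s k); apply: eqmodX_trans (trunc_mul _ _) _.
exact: eqmodXM.
Qed.

Lemma trunc_mulV s : s 0%N \is a GRing.unit -> trunc s * trunc (ps_inv s) = 1 %[modX N].
Proof.
move=> s0_unit; apply: eqmodX_trans (eqmodX_sym (trunc_mul _ _)) _.
by move=> i lt_iN; rewrite coef_trunc // ps_mulV // coef1 /ps_one; case: eqP.
Qed.

End TruncatedSeries.

Lemma unitmx_unitrig (R : comUnitRingType) n (A : 'M[R]_n) :
  is_trig_mx A -> (forall i, A i i = 1) -> A \in unitmx.
Proof. by move=> trigA diagA; rewrite unitmxE det_trig // big1 ?unitr1. Qed.

Lemma col_invmx (R : comUnitRingType) n (A : 'M[R]_n) (v : 'cV_n) j :
  A \in unitmx -> A *m v = delta_mx j 0 -> col j (invmx A) = v.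
Proof. by move=> unitA Av; rewrite colE -Av mulKmx. Qed.

Lemma natr_fact_neq0 (R : numDomainType) n : n`!%:R != 0 :> R.
Proof. by rewrite pnatr_eq0 -lt0n fact_gt0. Qed.

Lemma natr_binE (R : numFieldType) n m : (m <= n)%N ->
  'C(n, m)%:R = n`!%:R / (m`!%:R * (n - m)`!%:R) :> R.
Proof.
by move=> le_mn; rewrite -(bin_fact le_mn) !natrM mulfK // mulf_neq0 ?natr_fact_neq0.
Qed.

Lemma mul_central_binS k :
  (k.+2 * 'C(2 * k + 4, k.+2) = 2 * (2 * k + 3) * 'C(2 * k + 2, k.+1))%N.
Proof.
have e1 := mul_bin_diag (2 * k + 3).+1 k.+1.
have e2 := mul_bin_down (2 * k + 2).+1 k.+1.
rewrite /= (_ : (2 * k + 2).+1 - k.+1 = k.+2)%N in e2; last by lia.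
rewrite (_ : 2 * k + 4 = (2 * k + 3).+1)%N; last by lia.
rewrite -e1 (_ : (2 * k + 3 = (2 * k + 2).+1))%N; last by lia.
by rewrite -mulnA e2 /=; nia.
Qed.

Lemma coef_X_add1_exp (R : nzRingType) n j : (('X + 1) ^+ n : {poly R})`_j = 'C(n, j)%:R.
Proof.
have -> : ('X + 1) ^+ n = \poly_(i < n.+1) 'C(n, i)%:R :> {poly R}.
  by rewrite exprD1n poly_def; apply: eq_bigr => i _; rewrite scaler_nat.
by rewrite coef_poly; case: ltnP => // lt_nj; rewrite bin_small.
Qed.

Lemma borel_coef_rec_nat k i :
  ('C(2 * k + 2, k.+1) * 'C(k.+2, i.+1) * ((k + i.+1).+1 * (k + i.+1).+2)
  = k.+2 * ('C(2 * k + 4, k.+2) * k.+2 * 'C(k.+1, i)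
            + 'C(2 * k + 2, k.+1) * k.+1 * 'C(k, i.+1)))%N.
Proof.
have diag := mul_bin_diag k.+2 i.
have down1 := mul_bin_down k.+1 i.+1; rewrite subSS in down1.
have down2 := mul_bin_down k.+2 i.+1; rewrite subSS in down2.
rewrite /= in diag down1 down2.
rewrite -[(_ * k.+1 * _)%N]mulnA down1.
have -> : (k.+2 * ('C(2 * k + 4, k.+2) * k.+2 * 'C(k.+1, i)
            + 'C(2 * k + 2, k.+1) * ((k - i) * 'C(k.+1, i.+1)))
  = (k.+2 * 'C(2 * k + 4, k.+2)) * (k.+2 * 'C(k.+1, i))
    + 'C(2 * k + 2, k.+1) * (k - i) * (k.+2 * 'C(k.+1, i.+1)))%N by ring.
rewrite mul_central_binS diag down2.
have [le_ik | lt_ki] := leqP i k.+1; last first.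
  by rewrite (@bin_small k.+2 i.+1) ?(muln0, mul0n) //.
have sq : (2 * (2 * k + 3) * i.+1 + (k - i) * (k.+1 - i)
           = (k + i.+1).+1 * (k + i.+1).+2)%N by nia.
by rewrite -sq; ring.
Qed.

(* [ballot m k] is the coefficient of [z^k] in [C(z)^m], [C] the Catalan series. *)
Definition ballot (m k : nat) : rat :=
  if k is k'.+1 then 'C(2 * k' + m + 1, k'.+1)%:R - 'C(2 * k' + m + 1, k')%:R else 1.

Lemma ballot0 k : ballot 0 k = (k == 0)%N%:R.
Proof.
case: k => [|k] //=; rewrite addn0 -(@bin_sub (2 * k + 1) k) ?subrr //; last by lia.
by rewrite (_ : 2 * k + 1 - k = k.+1)%N ?subrr //; lia.
Qed.

Lemma ballotS m k : ballot m.+1 k.+1 = ballot m k.+1 + ballot m.+2 k.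
Proof.
case: k => [|k] /=.
  by rewrite !muln0 !add0n !addn1 !bin1 !bin0 -!natr1; ring.
rewrite (_ : 2 * k.+1 + m.+1 + 1 = (2 * k + m + 3).+1)%N; last by lia.
rewrite (_ : 2 * k.+1 + m + 1 = 2 * k + m + 3)%N; last by lia.
rewrite (_ : 2 * k + m.+2 + 1 = 2 * k + m + 3)%N; last by lia.
by rewrite !binS !natrD; ring.
Qed.

Lemma ballot1S k : ballot 1 k.+1 = 'C(2 * k + 2, k.+1)%:R / k.+2%:R.
Proof.
have := mul_bin_left (2 * k + 2) k.
rewrite (_ : 2 * k + 2 - k = k.+2)%N; last by lia.
move/(congr1 (fun n => n%:R : rat)); rewrite !natrM => e.
rewrite /= (_ : 2 * k + 1 + 1 = 2 * k + 2)%N; last by lia.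
apply: (@mulIf _ k.+2%:R); first by rewrite pnatr_eq0.
rewrite mulfVK ?pnatr_eq0 // mulrBl [X in _ - X]mulrC -e -natr1; ring.
Qed.

(* A closed form of [(Borel n)`_j] valid for every [j]: it vanishes for [j > n],
   whereas the summand in [Borel] would not, [n - j] being truncated. *)
Definition borel_coef (n j : nat) : rat :=
  ('C(2 * n + 2, n.+1) * n.+1 * 'C(n, j))%:R / ((n + j).+1 * (n + j).+2)%:R.

Lemma borel_coefE n j : (j <= n)%N ->
  (n.+1)%:R^-1 * ('C(2 * n + 2, n - j) * 'C(n + j, j))%:R = borel_coef n j.
Proof.
move=> le_jn; rewrite /borel_coef !natrM.
rewrite !natr_binE; [|lia..].
have -> : (2 * n + 2 - (n - j) = (n + j).+2)%N by lia.
have -> : (2 * n + 2 - n.+1 = n.+1)%N by lia.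
rewrite addnK !factS !natrM; field.
by rewrite -!natrD !nat1r !natr_fact_neq0 ?pnatr_eq0.
Qed.

Lemma borel_coef0 k : borel_coef k 0 = ballot 1 k.+1.
Proof.
rewrite /borel_coef ballot1S bin0 addn0 muln1 !natrM; field.
by rewrite -?natrD ?nat1r ?pnatr_eq0.
Qed.

Lemma borel_coef_rec k i :
  borel_coef k.+1 i + borel_coef k i.+1 = 'C(k.+2, i.+1)%:R * ballot 1 k.+1.
Proof.
rewrite /borel_coef addSnnS (_ : 2 * k.+1 + 2 = 2 * k + 4)%N; last by lia.
rewrite -mulrDl -natrD ballot1S mulrA -natrM.
apply/eqP; rewrite eqr_div ?pnatr_eq0 // -!natrM eqr_nat; apply/eqP.
by rewrite mulnC -borel_coef_rec_nat; ring.
Qed.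

Lemma coef_Borel n j : (Borel n)`_j = borel_coef n j.
Proof.
have -> : Borel n = \poly_(j < n.+1) borel_coef n j.
  by rewrite poly_def; apply: eq_bigr => k _; rewrite borel_coefE // -ltnS.
rewrite coef_poly; case: ltnP => // lt_nj.
by rewrite /borel_coef (bin_small lt_nj) muln0 mul0r.
Qed.

Lemma Borel0 : Borel 0 = 1.
Proof.
apply/polyP => j; rewrite coef_Borel coef1 /borel_coef.
by case: j => [|j]; rewrite ?bin0n ?muln0 ?mul0r.
Qed.

Local Notation c := (y + 1).

Lemma Borel_rec k : y * Borel k + (if k is k'.+1 then Borel k' else 0)
  = c ^+ k.+1 * (ballot 1 k)%:P - (k == 0)%N%:R.
Proof.
case: k => [|k]; first by rewrite Borel0 mulr1 addr0 polyC1 mulr1 expr1 addrK.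
rewrite subr0; apply/polyP => j.
rewrite coefD coefMC coef_X_add1_exp /y coefXM !coef_Borel.
by case: j => [|j] /=; rewrite ?add0r ?bin0 ?mul1r ?borel_coef0 ?borel_coef_rec.
Qed.

Lemma denL_expand : denL = 1 + (2%:R * c) *: 'X + c ^+ 2 *: 'X^2.
Proof. by rewrite /denL -!mul_polyC !polyCM; ring. Qed.

Lemma coef0_denL : denL`_0 = 1.
Proof. by rewrite denL_expand !coefD coef1 !coefZ coefX coefXn !mulr0 !addr0. Qed.

Lemma mul_denL p : p * denL = p + (2%:R * c) *: ('X * p) + c ^+ 2 *: ('X^2 * p).
Proof. by rewrite denL_expand -!mul_polyC; ring. Qed.

Section RiordanSeries.
Variable N : nat.

Definition denL_inv : {poly {poly rat}} := trunc N (ps_inv (ps_of_poly denL)).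
Definition Fs : {poly {poly rat}} := 'X * denL_inv.
Definition Gs : {poly {poly rat}} := (1 + y *: 'X) * denL_inv.

Lemma denL_mulV : denL * denL_inv = 1 %[modX N].
Proof.
have unit_den : ps_of_poly denL 0%N \is a GRing.unit by rewrite /ps_of_poly coef0_denL unitr1.
apply: eqmodX_trans (trunc_mulV (N := N) unit_den).
by apply: eqmodXM => //; apply/eqmodX_sym/trunc_of_poly.
Qed.

Lemma mul_denL_invK p : p * denL_inv * denL = p %[modX N].
Proof.
rewrite -mulrA [denL_inv * _]mulrC -[X in _ = X %[modX N]]mulr1.
by apply: eqmodXM => //; apply: denL_mulV.
Qed.

Lemma Fs_den : Fs * denL = 'X %[modX N].
Proof. exact: mul_denL_invK. Qed.

Lemma Gs_den : Gs * denL = 1 + y *: 'X %[modX N].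
Proof. exact: mul_denL_invK. Qed.

Lemma coef0_Fs : Fs`_0 = 0.
Proof. by rewrite coefXM. Qed.

Lemma coef0_denL_inv : (0 < N)%N -> denL_inv`_0 = 1.
Proof. by move=> N_gt0; rewrite coef_trunc // /ps_inv /= /ps_of_poly coef0_denL invr1. Qed.

Lemma Fs_expE k : Fs ^+ k = 'X^k * denL_inv ^+ k.
Proof. by rewrite exprMn_comm //; apply: mulrC. Qed.

Lemma coef_riordan_lt i k : (i < k)%N -> (Gs * Fs ^+ k)`_i = 0.
Proof. by move=> lt_ik; rewrite Fs_expE mulrCA coefXnM lt_ik. Qed.

Lemma coef_riordan_diag i : (0 < N)%N -> (Gs * Fs ^+ i)`_i = 1.
Proof.
move=> N_gt0; rewrite Fs_expE mulrCA coefXnM ltnn subnn !coef0M coefD coef1 coefZ.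
rewrite coefX mulr0 addr0 -[(denL_inv ^+ i)`_0]/(coefp 0 _) rmorphXn /=.
by rewrite coef0_denL_inv // expr1n !mul1r.
Qed.

Lemma riordanE i k : (i < N)%N -> riordan gL fL i k = (Gs * Fs ^+ k)`_i.
Proof.
move=> lt_iN; rewrite /riordan -(coef_trunc _ lt_iN); move: i lt_iN.
apply: eqmodX_trans (trunc_mul _ _) _; apply: eqmodXM.
  apply: eqmodX_trans (trunc_mul _ _) _.
  by apply: eqmodXM => //; apply: trunc_of_poly.
apply: eqmodX_trans (trunc_exp _ _) _; apply: eqmodXX.
apply: eqmodX_trans (trunc_mul _ _) _.
by apply: eqmodXM => //; apply: trunc_of_poly.
Qed.

Definition eval_Fs (s : nat -> {poly rat}) := \sum_(k < N) s k *: Fs ^+ k.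

Lemma eq_eval_Fs s t : s =1 t -> eval_Fs s = eval_Fs t.
Proof. by move=> est; apply: eq_bigr => k _; rewrite est. Qed.

Lemma eval_FsD s t : eval_Fs (fun k => s k + t k) = eval_Fs s + eval_Fs t.
Proof. by rewrite -big_split; apply: eq_bigr => k _; rewrite scalerDl. Qed.

Lemma eval_FsZ a s : eval_Fs (fun k => a * s k) = a%:P * eval_Fs s.
Proof. by rewrite mulr_sumr; apply: eq_bigr => k _; rewrite mul_polyC scalerA. Qed.

Lemma eval_Fs_delta : (0 < N)%N -> eval_Fs (fun k => (k == 0)%N%:R) = 1.
Proof.
move=> N_gt0; rewrite /eval_Fs -(prednK N_gt0) big_ord_recl scale1r expr0 big1 ?addr0 //.
by move=> k _; rewrite scale0r.
Qed.

Lemma eval_Fs_shift s :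
  eval_Fs (fun k => if k is k'.+1 then s k' else 0) = Fs * eval_Fs s %[modX N].
Proof.
move=> i lt_iN; have N_gt0 : (0 < N)%N := leq_ltn_trans (leq0n i) lt_iN.
rewrite /eval_Fs -(prednK N_gt0) big_ord_recl scale0r add0r mulr_sumr big_ord_recr.
rewrite /= coefD -scalerAr -exprS coefZ Fs_expE coefXnM prednK // lt_iN mulr0 addr0.
by under [in RHS]eq_bigr do rewrite -scalerAr -exprS.
Qed.

Local Notation cP := (c%:P : {poly {poly rat}}).

(* Both sides satisfy X_(m+1) = X_m + c Fs X_(m+2): for the ballot numbers
   this is [ballotS], for the powers of 1 + c x it is (1 + c x)^2 Fs = x. *)
Lemma ballot_expansion m :
  eval_Fs (fun k => c ^+ k * (ballot m k)%:P) = (1 + cP * 'X) ^+ m %[modX N].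
Proof.
have [N0 | N_gt0] := posnP N; first by move=> i; rewrite N0.
pose S m := eval_Fs (fun k => c ^+ k * (ballot m k)%:P).
pose T m := (1 + cP * 'X) ^+ m.
apply/eqmodX_subr0_eq; move: m; apply: (@eqmodX0_rec _ _ (fun m => S m - T m) cP Fs).
- exact: coef0_Fs.
- suff -> : S 0%N = T 0%N by rewrite subrr.
  rewrite /T expr0 -(eval_Fs_delta N_gt0); apply: eq_eval_Fs => k.
  by rewrite ballot0; case: k => [|k]; rewrite ?mulr0 ?mulr1 ?polyC1 ?polyC0.
move=> m.
have Srec : S m.+1 = S m + cP * (Fs * S m.+2) %[modX N].
  rewrite /S (@eq_eval_Fs _ (fun k => c ^+ k * (ballot m k)%:P
      + c * (if k is k'.+1 then c ^+ k' * (ballot m.+2 k')%:P else 0))).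
    rewrite eval_FsD eval_FsZ; apply: eqmodXD => //; apply: eqmodXM => //.
    exact: eval_Fs_shift.
  by case=> [|k]; rewrite ?mulr0 ?addr0 // ballotS polyCD exprS; ring.
have Trec : T m.+1 = T m + cP * (Fs * T m.+2) %[modX N].
  have -> : cP * (Fs * T m.+2) = cP * T m * (Fs * denL).
    by rewrite /T /denL -mul_polyC -addn2 exprD; ring.
  have -> : T m.+1 = T m + cP * T m * 'X by rewrite /T exprS; ring.
  by apply: eqmodXD => //; apply: eqmodXM => //; apply/eqmodX_sym/Fs_den.
have -> : S m - T m + cP * (Fs * (S m.+2 - T m.+2))
        = (S m + cP * (Fs * S m.+2)) - (T m + cP * (Fs * T m.+2)) by ring.
exact: eqmodXB.
Qed.

Lemma eval_Fs_Borel :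
  (y%:P + Fs) * eval_Fs Borel = cP * (1 + cP * 'X) - 1 %[modX N].
Proof.
have [N0 | N_gt0] := posnP N; first by move=> i; rewrite N0.
rewrite mulrDl -eval_FsZ.
apply: eqmodX_trans (eqmodXD (eqmodX_refl _) (eqmodX_sym (eval_Fs_shift Borel))) _.
rewrite -eval_FsD (@eq_eval_Fs _
  (fun k => c * (c ^+ k * (ballot 1 k)%:P) + (-1) * (k == 0)%N%:R)).
  rewrite eval_FsD !eval_FsZ eval_Fs_delta // mulr1 polyCN polyC1.
  apply: eqmodXD => //; apply: eqmodXM => //.
  by rewrite -[X in _ = X %[modX N]]expr1; apply: ballot_expansion.
by move=> k; rewrite Borel_rec exprS mulrA mulN1r.
Qed.

Lemma Gs_eval_Borel : Gs * eval_Fs Borel = 1 %[modX N].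
Proof.
apply: eqmodX_subr0_eq; apply: (@eqmodX0_cancel_mulCD _ _ y Fs); rewrite ?polyX_eq0 ?coef0_Fs //.
have -> : (y%:P + Fs) * (Gs * eval_Fs Borel - 1)
        = Gs * ((y%:P + Fs) * eval_Fs Borel) - (y%:P + Fs) by ring.
apply: (@eqmodX_trans _ _ (Gs * (cP * (1 + cP * 'X) - 1) - (y%:P + Fs))).
  by apply: eqmodXB => //; apply: eqmodXM => //; apply: eval_Fs_Borel.
have -> : Gs * (cP * (1 + cP * 'X) - 1) = y%:P * (denL * denL_inv) + Fs.
  by rewrite /Gs /Fs /denL -!mul_polyC polyCD polyC1; ring.
rewrite -[X in _ = X %[modX N]](subrr (y%:P + Fs)).
apply: eqmodXB => //; apply: eqmodXD => //.
by rewrite -[X in _ = X %[modX N]]mulr1; apply: eqmodXM => //; apply: denL_mulV.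
Qed.

Lemma sum_riordan_Borel n : (n < N)%N ->
  \sum_(k < N) (Gs * Fs ^+ k)`_n * Borel k = (n == 0)%N%:R.
Proof.
move=> lt_nN; rewrite -coef1 -(Gs_eval_Borel lt_nN) mulr_sumr coef_sum.
by apply: eq_bigr => k _; rewrite -scalerAr coefZ mulrC.
Qed.

Lemma riordan_col_mul_denL k : Gs * Fs ^+ k * denL
  = (if k is k'.+1 then 'X * (Gs * Fs ^+ k') else 1 + y *: 'X) %[modX N].
Proof.
case: k => [|k]; first by rewrite expr0 mulr1; apply: Gs_den.
have -> : Gs * Fs ^+ k.+1 * denL = Gs * Fs ^+ k * (Fs * denL) by rewrite exprSr; ring.
by rewrite [_ * (Gs * _)]mulrC; apply: eqmodXM => //; apply: Fs_den.
Qed.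

Lemma coef_riordan_rec n k : (n.+2 < N)%N ->
  (Gs * Fs ^+ k)`_n.+2 + 2%:R * c * (Gs * Fs ^+ k)`_n.+1 + c ^+ 2 * (Gs * Fs ^+ k)`_n
  = if k is k'.+1 then (Gs * Fs ^+ k')`_n.+1 else 0.
Proof.
move=> lt_nN; have := riordan_col_mul_denL k lt_nN.
rewrite mul_denL !coefD !coefZ coefXM coefXnM /= !subSS subn0 => ->.
by case: k => [|k]; rewrite ?coefXM // !coefE /= mulr0 addr0.
Qed.

Lemma coef_Gs1 : (1 < N)%N -> Gs`_1 = - (y + 2%:R).
Proof.
move=> lt_1N; have := Gs_den lt_1N; rewrite mul_denL !coefE /= mulr0 addr0 mulr1.
have := coef_riordan_diag 0 (ltnW lt_1N); rewrite expr0 mulr1 => ->.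
by move=> /(canRL (addrK _)) ->; ring.
Qed.

End RiordanSeries.

Lemma P_rec n : P n.+2 = ('X - (2%:R * c)%:P) * P n.+1 - (c ^+ 2)%:P * P n.
Proof. by rewrite /P /=; case: (Ppair n). Qed.

Lemma coef_P_rec n k :
  (P n.+2)`_k + 2%:R * c * (P n.+1)`_k + c ^+ 2 * (P n)`_k
  = if k is k'.+1 then (P n.+1)`_k' else 0.
Proof.
rewrite P_rec mulrBl !coefB coefXM !coefCM.
by case: k => [|k] /=; ring.
Qed.

Lemma coef_P N n k : (n < N)%N -> (P n)`_k = (Gs N * Fs N ^+ k)`_n.
Proof.
elim/ltn_ind: n k => -[|[|n]] IHn k lt_nN.
- rewrite /P /= coef1; case: k => [|k]; first by rewrite coef_riordan_diag.
  by rewrite coef_riordan_lt.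
- rewrite /P /= coefB coefX coefC; case: k => [|[|k]].
  + by rewrite expr0 mulr1 coef_Gs1 // sub0r.
  + by rewrite coef_riordan_diag 1?ltnW // subr0.
  + by rewrite coef_riordan_lt // subr0.
- apply: (@addIr _ (2%:R * c * (P n.+1)`_k + c ^+ 2 * (P n)`_k)).
  rewrite addrA coef_P_rec !IHn ?(ltn_trans _ lt_nN) // addrA coef_riordan_rec //.
  by case: k => [|k] //; rewrite IHn // (ltn_trans _ lt_nN).
Qed.

Lemma riordan_truncE N : riordan_trunc gL fL N = \matrix_(i, k) (Gs N * Fs N ^+ k)`_i.
Proof. by apply/matrixP => i k; rewrite !mxE (riordanE _ (ltn_ord i)). Qed.

Lemma riordan_trunc_unitmx N : riordan_trunc gL fL N \in unitmx.
Proof.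
rewrite riordan_truncE; apply: unitmx_unitrig => [|i]; rewrite ?mxE.
  by apply/is_trig_mxP => i k lt_ik; rewrite mxE coef_riordan_lt.
by rewrite coef_riordan_diag // (leq_ltn_trans _ (ltn_ord i)).
Qed.

Lemma riordan_trunc_mul_Borel N :
  riordan_trunc gL fL N.+1 *m (\col_k Borel k) = delta_mx 0 0.
Proof.
apply/matrixP => i j; rewrite (ord1 j) !mxE eqxx andbT.
rewrite -[(i == _)%:R]/((i == 0 :> nat)%:R) -(sum_riordan_Borel (ltn_ord i)).
by apply: eq_bigr => k _; rewrite riordan_truncE !mxE.
Qed.

Lemma borel_functional_sum N (p : {poly {poly rat}}) : (size p <= N)%N ->
  borel_functional p = \sum_(k < N) p`_k * Borel k.
Proof.
move=> le_pN; rewrite /borel_functional (big_ord_widen N (fun k => p`_k * Borel k) le_pN).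
rewrite big_mkcond; apply: eq_bigr => k _; case: ltnP => // le_pk.
by rewrite nth_default ?mul0r.
Qed.

Lemma borel_functional_P n : (0 < n)%N -> borel_functional (P n) = 0.
Proof.
move=> n_gt0; pose N := maxn (size (P n)) n.+1.
have lt_nN : (n < N)%N by rewrite leq_maxr.
rewrite (borel_functional_sum (leq_maxl _ n.+1)).
under eq_bigr do rewrite (coef_P _ lt_nN).
by rewrite sum_riordan_Borel // eqn0Ngt n_gt0.
Qed.

Theorem mainTheorem7 :
  (forall N : nat,
     riordan_trunc gL fL N.+1 \in unitmx /\
     forall i : 'I_N.+1, invmx (riordan_trunc gL fL N.+1) i ord0 = Borel i)
  /\ borel_functional 1 = 1
  /\ (forall n : nat, (0 < n)%N -> borel_functional (P n) = 0).
Proof.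
split; [move=> N | split; last exact: borel_functional_P].
  split=> [|i]; first exact: riordan_trunc_unitmx.
  have := col_invmx (riordan_trunc_unitmx N.+1) (riordan_trunc_mul_Borel N).
  by move/matrixP/(_ i ord0); rewrite !mxE.
by rewrite (borel_functional_sum (N := 1)) ?size_poly1 // big_ord1 coef1 Borel0 mul1r.
Qed.
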